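(* Suppose $\dim_{\mathbb{C}}N=n-m=4$, where $N=\mathrm{span}_{\mathbb{C}}\{I_{m+1},\dots,I_n\}$, and suppose the structure constants satisfy $\Upsilon^{m+1}_{m+1,m+2}\Upsilon^{m+2}_{m+2,m+3}=\Upsilon^{m+1}_{m+1,m+2}\Upsilon^{m+2}_{m+2,m+4}=\Upsilon^{m+1}_{m+1,m+3}\Upsilon^{m+2}_{m+3,m+4}=\Upsilon^{m+3}_{m+3,m+4}\Upsilon^{m+1}_{m+1,m+3}=\Upsilon^{m+1}_{m+2,m+3}\Upsilon^{m+1}_{m+3,m+4}=\Upsilon^{m+1}_{m+2,m+3}\Upsilon^{m+2}_{m+3,m+4}=\Upsilon^{m+1}_{m+2,m+3}\Upsilon^{m+3}_{m+3,m+4}=\Upsilon^{m+1}_{m+1,m+2}\Upsilon^{m+1}_{m+2,m+3}\Upsilon^{m+2}_{m+3,m+4}=\Upsilon^{m+1}_{m+1,m+2}\Upsilon^{m+1}_{m+2,m+3}\Upsilon^{m+3}_{m+3,m+4}=\Upsilon^{m+2}_{m+2,m+3}\Upsilon^{m+1}_{m+3,m+4}=\Upsilon^{m+2}_{m+2,m+3}\Upsilon^{m+3}_{m+3,m+4}=\Upsilon^{m+2}_{m+2,m+3}\Upsilon^{m+1}_{m+1,m+2}\Upsilon^{m+1}_{m+3,m+4}=\Upsilon^{m+2}_{m+2,m+3}\Upsilon^{m+1}_{m+1,m+2}\Upsilon^{m+2}_{m+3,m+4}=\Upsilon^{m+2}_{m+2,m+3}\Upsilon^{m+1}_{m+1,m+2}\Upsilon^{m+3}_{m+3,m+4}=0.$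 Then for every circle $C$ as described in the context, $\lambda:=\int_C\zeta^{-1}\,d\zeta=2\pi i$ (that is, $2\pi i$ times the unit of $\mathbb{A}_n^m$).
   Context: Fix natural numbers $m\le n$. $\mathbb{A}_n^m$ is a commutative associative algebra with unit over $\mathbb{C}$ with a basis $\{I_k\}_{k=1}^n$ satisfying: (1) for $r,s\in\{1,\dots,m\}$, $I_rI_s=0$ if $r\ne s$ and $I_rI_r=I_r$; (2) for $r,s\in\{m+1,\dots,n\}$, $I_rI_s=\sum_{k=\max\{r,s\}+1}^{n}\Upsilon^{s}_{r,k}I_k$ with constants $\Upsilon^s_{r,k}\in\mathbb{C}$ (so $\Upsilon^s_{r,k}$ is the coefficient of $I_k$ in $I_rI_s$); (3) for each $s\in\{m+1,\dots,n\}$ there is a unique $u_s\in\{1,\dots,m\}$ such that for $r\in\{1,\dots,m\}$, $I_rI_s=I_s$ if $r=u_s$ and $0$ otherwise. Unit $1=\sum_{u=1}^mI_u$; $\mathbb{A}_n^m=S\oplus_sN$ with $S=\mathrm{span}\{I_1,\dots,I_m\}$, $N=\mathrm{span}\{I_{m+1},\dots,I_n\}$. $f_u(\sum_k\lambda_kI_k)=\lambda_u$. Let $e_1=1$, $e_2=\sum_ka_kI_k$, $e_3=\sum_kb_kI_k$ ($a_k,b_k\in\mathbb{C}$) be linearly independent over $\mathbb{R}$; $\zeta=xe_1+ye_2+ze_3$ ($x,y,z\in\mathbb{R}$), $E_3$ their real span. Standing assumption: $f_u(E_3)=\mathbb{C}$ for all $u=1,\dots,m$. $\zeta$ is non-invertible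 exactly when $(x,y,z)$ lies on one of the lines $L_u=\{x+y\,\mathrm{Re}\,a_u+z\,\mathrm{Re}\,b_u=0,\ y\,\mathrm{Im}\,a_u+z\,\mathrm{Im}\,b_u=0\}$. The circle: $C\subset E_3$ is $C=\{xe_1+ye_2+ze_3:(x,y,z)\in C'\}$ for a Euclidean circle $C'\subset\mathbb{R}^3$ of radius $R>0$ centered at the origin, such that for every $u$ the image $f_u(C)$ is a positively oriented closed Jordan curve in $\mathbb{C}$ bounding a domain containing $0$. Integral: for a Jordan rectifiable curve $\gamma$ and continuous $\Psi=\sum_k(U_k+iV_k)I_k$ on $\gamma_\zeta$, $\int_{\gamma_\zeta}\Psi d\zeta:=\sum_kI_k\int_\gamma(U_k+iV_k)dx+\sum_ke_2I_k\int_\gamma(U_k+iV_k)dy+\sum_ke_3I_k\int_\gamma(U_k+iV_k)dz$. *)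

From Stdlib Require Import Reals.
From Coquelicot Require Import Coquelicot.
Open Scope R_scope.

(* Elements of the algebra A_n^m are represented by their coordinate functions
   k |-> lambda_k in the basis I_1, ..., I_n; only indices 1 <= k <= n matter. *)
Definition alg := nat -> C.

(* Structure constants: [c r s k] is the coefficient of I_k in I_r I_s. *)
Definition sconst := nat -> nat -> nat -> C.

(* Upsilon^s_{r,k} := coefficient of I_k in I_r I_s. *)
Definition Ups (c : sconst) (s r k : nat) : C := c r s k.

Definition csum (f : nat -> C) (lo hi : nat) : C := sum_n_m f lo hi.

Definition amul (n : nat) (c : sconst) (a b : alg) : alg :=
  fun k => csum (fun r => csum (fun s => (a r * b s * c r s k)%C) 1 n) 1 n.

Definition aadd (a b : alg) : alg := fun k => (a k + b k)%C.
Definition ascal (x : R) (a : alg) : alg := fun k => (RtoC x * a k)%C.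
Definition cscal (z : C) (a : alg) : alg := fun k => (z * a k)%C.

Definition basis (j : nat) : alg := fun k => if Nat.eqb k j then 1%C else 0%C.

Definition aone (m : nat) : alg := fun k => if Nat.leb k m then 1%C else 0%C.

Definition aeq (n : nat) (a b : alg) : Prop := forall k, (1 <= k <= n)%nat -> a k = b k.

(* the axioms (1)-(3) of A_n^m, together with commutativity and associativity *)
Definition is_Anm (m n : nat) (c : sconst) : Prop :=
  (m <= n)%nat /\
  (* (1) *)
  (forall r s k, (1 <= r <= m)%nat -> (1 <= s <= m)%nat -> (1 <= k <= n)%nat ->
     c r s k = (if andb (Nat.eqb r s) (Nat.eqb k r) then 1%C else 0%C)) /\
  (* (2) *)
  (forall r s k, (m + 1 <= r <= n)%nat -> (m + 1 <= s <= n)%nat -> (1 <= k <= n)%nat ->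
     (k <= Nat.max r s)%nat -> c r s k = 0%C) /\
  (* (3) *)
  (forall s, (m + 1 <= s <= n)%nat -> exists u, (1 <= u <= m)%nat /\
     forall r, (1 <= r <= m)%nat -> aeq n (amul n c (basis r) (basis s))
        (if Nat.eqb r u then basis s else (fun _ => 0%C))) /\
  (forall r s k, (1 <= r <= n)%nat -> (1 <= s <= n)%nat -> (1 <= k <= n)%nat ->
     c r s k = c s r k) /\
  (forall a b d, aeq n (amul n c (amul n c a b) d) (amul n c a (amul n c b d))).

Definition f_ (u : nat) (a : alg) : C := a u.

Definition zeta (m : nat) (e2 e3 : alg) (x y z : R) : alg :=
  aadd (ascal x (aone m)) (aadd (ascal y e2) (ascal z e3)).

(* A parametrized circle C' in R^3 of radius rho centred at 0:
   t |-> rho (cos t p + sin t q), t in [0, 2 pi], with p, q orthonormal.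
   Every oriented circle of radius rho centred at the origin is of this form. *)
Definition orthonormal (p q : R * R * R) : Prop :=
  let '(p1, p2, p3) := p in let '(q1, q2, q3) := q in
  p1 * p1 + p2 * p2 + p3 * p3 = 1 /\ q1 * q1 + q2 * q2 + q3 * q3 = 1 /\
  p1 * q1 + p2 * q2 + p3 * q3 = 0.

Definition cx (rho : R) (p q : R * R * R) (t : R) : R :=
  let '(p1, _, _) := p in let '(q1, _, _) := q in rho * (cos t * p1 + sin t * q1).
Definition cy (rho : R) (p q : R * R * R) (t : R) : R :=
  let '(_, p2, _) := p in let '(_, q2, _) := q in rho * (cos t * p2 + sin t * q2).
Definition cz (rho : R) (p q : R * R * R) (t : R) : R :=
  let '(_, _, p3) := p in let '(_, _, q3) := q in rho * (cos t * p3 + sin t * q3).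
Definition dcx (rho : R) (p q : R * R * R) (t : R) : R :=
  let '(p1, _, _) := p in let '(q1, _, _) := q in rho * (- sin t * p1 + cos t * q1).
Definition dcy (rho : R) (p q : R * R * R) (t : R) : R :=
  let '(_, p2, _) := p in let '(_, q2, _) := q in rho * (- sin t * p2 + cos t * q2).
Definition dcz (rho : R) (p q : R * R * R) (t : R) : R :=
  let '(_, _, p3) := p in let '(_, _, q3) := q in rho * (- sin t * p3 + cos t * q3).

Definition zeta_C (m : nat) (e2 e3 : alg) (rho : R) (p q : R * R * R) (t : R) : alg :=
  zeta m e2 e3 (cx rho p q t) (cy rho p q t) (cz rho p q t).

Definition jordan_closed (g : R -> C) : Prop :=
  g 0 = g (2 * PI) /\
  (forall t, 0 <= t <= 2 * PI -> continuous g t) /\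
  (forall s t, 0 <= s < 2 * PI -> 0 <= t < 2 * PI -> g s = g t -> s = t).

Definition winding_number_0 (g : R -> C) (w : Z) : Prop :=
  (forall t, 0 <= t <= 2 * PI -> g t <> 0%C) /\
  exists theta : R -> R,
    (forall t, 0 <= t <= 2 * PI -> continuous theta t) /\
    (forall t, 0 <= t <= 2 * PI ->
       g t = (RtoC (Cmod (g t)) * (cos (theta t), sin (theta t)))%C) /\
    theta (2 * PI) - theta 0 = 2 * PI * IZR w.

(* g is a positively oriented Jordan curve bounding a domain containing 0 *)
Definition pos_jordan_around_0 (g : R -> C) : Prop :=
  jordan_closed g /\ winding_number_0 g 1.

Definition CRInt (f : R -> C) (a b : R) : C :=
  (RInt (fun t => Re (f t)) a b, RInt (fun t => Im (f t)) a b).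

Definition curve_integral (n : nat) (c : sconst) (e2 e3 : alg) (rho : R)
    (p q : R * R * R) (Psi : R -> alg) : alg :=
  let Lx : alg := fun k => CRInt (fun t => (Psi t k * RtoC (dcx rho p q t))%C) 0 (2 * PI) in
  let Ly : alg := fun k => CRInt (fun t => (Psi t k * RtoC (dcy rho p q t))%C) 0 (2 * PI) in
  let Lz : alg := fun k => CRInt (fun t => (Psi t k * RtoC (dcz rho p q t))%C) 0 (2 * PI) in
  aadd Lx (aadd (amul n c e2 Ly) (amul n c e3 Lz)).

From Stdlib Require Import Reals Arith Lia Lra Setoid Ring Morphisms.
From Coquelicot Require Import Coquelicot.
Open Scope R_scope.

(* Write the point of the circle as zeta = D (1 + W), where D is its semisimple part
   (its coordinates on I_1, ..., I_m, all nonzero since zeta is invertible) and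
   W = D^-1 zeta - 1 lies in the radical N.  Axiom (2) filters N, so W^5 = 0 when
   dim N = 4; hence zeta^-1 = D^-1 (1 - W + W^2 - W^3 + W^4) and
     zeta^-1 zeta' = D^-1 D' + (1 - W + W^2 - W^3) W'.
   Each W^j W' is the derivative of W^(j+1) / (j+1), so it integrates to 0 around the
   closed curve, while the u-th coordinate of D^-1 D' is f_u(zeta)' / f_u(zeta), whose
   integral is 2 pi i times the winding number 1 of f_u(C) around 0. *)

Lemma csum_ext (f g : nat -> C) lo hi :
  (forall k, (lo <= k <= hi)%nat -> f k = g k) -> csum f lo hi = csum g lo hi.
Proof. intros H; unfold csum; apply sum_n_m_ext_loc; auto. Qed.

Lemma csum_eq0 (f : nat -> C) lo hi :
  (forall k, (lo <= k <= hi)%nat -> f k = 0%C) -> csum f lo hi = 0%C.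
Proof.
  intros H. rewrite (csum_ext f (fun _ => @zero C_AbelianGroup)); auto.
  apply (@sum_n_m_const_zero C_AbelianGroup).
Qed.

Lemma csumD (f g : nat -> C) lo hi :
  csum (fun k => (f k + g k)%C) lo hi = (csum f lo hi + csum g lo hi)%C.
Proof. apply (@sum_n_m_plus C_AbelianGroup). Qed.

Lemma csumMl (z : C) (f : nat -> C) lo hi :
  csum (fun k => (z * f k)%C) lo hi = (z * csum f lo hi)%C.
Proof. apply (@sum_n_m_mult_l C_Ring). Qed.

Lemma csum_split (f : nat -> C) lo mid hi :
  (lo <= S mid)%nat -> (mid <= hi)%nat ->
  csum f lo hi = (csum f lo mid + csum f (S mid) hi)%C.
Proof. intros H1 H2. apply (@sum_n_m_Chasles C_AbelianGroup); lia. Qed.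

Lemma csum_delta (f : nat -> C) lo hi j :
  (lo <= j <= hi)%nat -> (forall k, (lo <= k <= hi)%nat -> k <> j -> f k = 0%C) ->
  csum f lo hi = f j.
Proof.
  intros Hj H.
  assert (Htail : csum f j hi = f j).
  { rewrite (csum_split f j j hi) by lia.
    rewrite (csum_eq0 f (S j) hi) by (intros k Hk; apply H; lia).
    unfold csum; rewrite sum_n_n. apply injective_projections; simpl; ring. }
  destruct (Nat.eq_dec lo j) as [<-|Hne]; [exact Htail|].
  rewrite (csum_split f lo (j - 1) hi) by lia. replace (S (j - 1)) with j by lia.
  rewrite Htail, (csum_eq0 f lo (j - 1)) by (intros k Hk; apply H; lia).
  apply injective_projections; simpl; ring.
Qed.

Lemma csum_exchange (f : nat -> nat -> C) lo hi lo' hi' :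
  csum (fun r => csum (f r) lo' hi') lo hi =
  csum (fun s => csum (fun r => f r s) lo hi) lo' hi'.
Proof.
  destruct (le_lt_dec lo hi) as [Hle|Hlt].
  - replace hi with (lo + (hi - lo))%nat by lia.
    induction (hi - lo)%nat as [|d IH].
    + rewrite Nat.add_0_r. unfold csum at 1. rewrite sum_n_n.
      apply csum_ext; intros. unfold csum; now rewrite sum_n_n.
    + unfold csum at 1. rewrite Nat.add_succ_r, sum_n_Sm by lia.
      fold (csum (fun r => csum (f r) lo' hi') lo (lo + d)).
      rewrite IH, <- csumD. apply csum_ext; intros k _.
      unfold csum. rewrite sum_n_Sm by lia. reflexivity.
  - unfold csum at 1. rewrite sum_n_m_zero by lia. symmetry.
    apply csum_eq0. intros; unfold csum; now rewrite sum_n_m_zero by lia.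
Qed.

Definition azero : alg := fun _ => 0%C.
Definition aopp (a : alg) : alg := fun k => (- a k)%C.
Definition asub (a b : alg) : alg := aadd a (aopp b).

Add Parametric Relation (n : nat) : alg (aeq n)
  reflexivity proved by (fun x k _ => eq_refl)
  symmetry proved by (fun x y H k Hk => eq_sym (H k Hk))
  transitivity proved by (fun x y z H1 H2 k Hk => eq_trans (H1 k Hk) (H2 k Hk))
  as aeq_rel.

Lemma amul_ext n c a a' b b' k : aeq n a a' -> aeq n b b' ->
  amul n c a b k = amul n c a' b' k.
Proof.
  intros Ha Hb. unfold amul.
  apply csum_ext; intros r Hr; apply csum_ext; intros s Hs. now rewrite Ha, Hb.
Qed.

Add Parametric Morphism (n : nat) (c : sconst) : (amul n c)
  with signature (aeq n) ==> (aeq n) ==> (aeq n) as amul_mor.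
Proof. intros a a' Ha b b' Hb k _. now apply amul_ext. Qed.

Add Parametric Morphism (n : nat) : aadd
  with signature (aeq n) ==> (aeq n) ==> (aeq n) as aadd_mor.
Proof. intros a a' Ha b b' Hb k Hk; unfold aadd; now rewrite Ha, Hb. Qed.

Add Parametric Morphism (n : nat) : aopp
  with signature (aeq n) ==> (aeq n) as aopp_mor.
Proof. intros a a' Ha k Hk; unfold aopp; now rewrite Ha. Qed.

Lemma amulDr n c a b d k : amul n c a (aadd b d) k = (amul n c a b k + amul n c a d k)%C.
Proof.
  unfold amul, aadd. rewrite <- csumD. apply csum_ext; intros.
  rewrite <- csumD. apply csum_ext; intros. ring.
Qed.

Lemma amulZr n c a x b k : amul n c a (ascal x b) k = (RtoC x * amul n c a b k)%C.
Proof.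
  unfold amul, ascal. rewrite <- csumMl. apply csum_ext; intros.
  rewrite <- csumMl. apply csum_ext; intros. ring.
Qed.

Section Anm.
Variables (m n : nat) (c : sconst).
Hypothesis HA : is_Anm m n c.

Lemma Anm_le : (m <= n)%nat.
Proof. apply HA. Qed.

Lemma amul_basis r s k : (1 <= r <= n)%nat -> (1 <= s <= n)%nat ->
  amul n c (basis r) (basis s) k = c r s k.
Proof.
  intros Hr Hs. unfold amul.
  rewrite (csum_delta _ 1 n r Hr).
  - rewrite (csum_delta _ 1 n s Hs).
    + unfold basis; rewrite !Nat.eqb_refl; ring.
    + intros k' _ Hk'. unfold basis. rewrite Nat.eqb_refl.
      destruct (Nat.eqb_spec k' s); [lia|ring].
  - intros k' _ Hk'. apply csum_eq0. intros. unfold basis.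
    destruct (Nat.eqb_spec k' r); [lia|ring].
Qed.

Lemma coef_SN_S r s k : (1 <= r <= m)%nat -> (m < s <= n)%nat -> (1 <= k <= n)%nat ->
  (k <= m)%nat -> c r s k = 0%C.
Proof.
  destruct HA as [_ [_ [_ [H3 _]]]]. intros Hr Hs Hk Hkm.
  destruct (H3 s) as [u [Hu Hmul]]; [lia|].
  specialize (Hmul r Hr k Hk). rewrite amul_basis in Hmul by lia.
  rewrite Hmul. destruct (Nat.eqb r u); [|reflexivity].
  unfold basis. destruct (Nat.eqb_spec k s); [lia|reflexivity].
Qed.

Lemma coef_on_S r s k : (1 <= k <= m)%nat -> (1 <= r <= n)%nat -> (1 <= s <= n)%nat ->
  c r s k = if andb (Nat.eqb r k) (Nat.eqb s k) then 1%C else 0%C.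
Proof.
  pose proof Anm_le. destruct HA as [_ [H1 [H2 [_ [Hc _]]]]]. intros Hk Hr Hs.
  destruct (le_lt_dec r m); destruct (le_lt_dec s m).
  - rewrite H1 by lia.
    destruct (Nat.eqb_spec r s); destruct (Nat.eqb_spec k r);
      destruct (Nat.eqb_spec r k); destruct (Nat.eqb_spec s k); simpl; try lia; reflexivity.
  - rewrite coef_SN_S by lia. destruct (Nat.eqb_spec s k); [lia|].
    now rewrite Bool.andb_false_r.
  - rewrite Hc, coef_SN_S by lia. destruct (Nat.eqb_spec r k); [lia|reflexivity].
  - rewrite H2 by lia. destruct (Nat.eqb_spec r k); [lia|reflexivity].
Qed.

Lemma coef_SS_N r s k : (1 <= r <= m)%nat -> (1 <= s <= m)%nat -> (m < k <= n)%nat ->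
  c r s k = 0%C.
Proof.
  destruct HA as [_ [H1 _]]. intros. rewrite H1 by lia.
  destruct (Nat.eqb_spec k r); [lia|]. now rewrite Bool.andb_false_r.
Qed.

(* [1 * I_s = I_s]; for [s > m] this rests on axiom (3) *)
Lemma sum_coef_S s k : (1 <= k <= n)%nat -> (1 <= s <= n)%nat ->
  csum (fun r => c r s k) 1 m = if Nat.eqb s k then 1%C else 0%C.
Proof.
  pose proof Anm_le. destruct HA as [_ [_ [_ [H3 _]]]]. intros Hk Hs.
  destruct (le_lt_dec k m).
  - destruct (Nat.eqb_spec s k) as [<-|Hsk].
    + rewrite (csum_delta _ 1 m s) by (lia || (intros r Hr Hne;
        rewrite coef_on_S by lia; destruct (Nat.eqb_spec r s); [lia|reflexivity])).
      rewrite coef_on_S by lia. now rewrite Nat.eqb_refl.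
    + apply csum_eq0. intros. rewrite coef_on_S by lia.
      destruct (Nat.eqb_spec s k); [lia|]. now rewrite Bool.andb_false_r.
  - destruct (le_lt_dec s m).
    + destruct (Nat.eqb_spec s k); [lia|]. apply csum_eq0; intros; apply coef_SS_N; lia.
    + destruct (H3 s) as [u [Hu Hmul]]; [lia|].
      assert (Hcoef : forall r, (1 <= r <= m)%nat ->
                c r s k = if Nat.eqb r u then basis s k else 0%C).
      { intros r Hr. specialize (Hmul r Hr k Hk). rewrite amul_basis in Hmul by lia.
        rewrite Hmul. now destruct (Nat.eqb r u). }
      rewrite (csum_delta _ 1 m u Hu) by (intros r Hr Hne; rewrite Hcoef by lia;
        destruct (Nat.eqb_spec r u); [lia|reflexivity]).
      rewrite Hcoef, Nat.eqb_refl by lia. unfold basis. now rewrite Nat.eqb_sym.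
Qed.

Lemma amul_coord_S a b u : (1 <= u <= m)%nat -> amul n c a b u = (a u * b u)%C.
Proof.
  intros Hu. pose proof Anm_le. unfold amul.
  rewrite (csum_delta _ 1 n u) by (lia || (intros k Hk Hne; apply csum_eq0; intros s Hs;
    rewrite coef_on_S by lia; destruct (Nat.eqb_spec k u); [lia|simpl; ring])).
  rewrite (csum_delta _ 1 n u) by (lia || (intros k Hk Hne; rewrite coef_on_S by lia;
    destruct (Nat.eqb_spec k u); [lia|]; rewrite Bool.andb_false_r; ring)).
  rewrite coef_on_S, Nat.eqb_refl by lia. simpl. ring.
Qed.

Lemma amul1a a : aeq n (amul n c (aone m) a) a.
Proof.
  intros k Hk. pose proof Anm_le. unfold amul.
  rewrite (csum_split _ 1 m n), (csum_eq0 _ (S m) n) by (lia || (intros r Hr;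
    apply csum_eq0; intros; unfold aone; destruct (Nat.leb_spec r m); [lia|ring])).
  rewrite (csum_ext _ (fun r => csum (fun s => a s * c r s k)%C 1 n) 1 m)
    by (intros r Hr; apply csum_ext; intros; unfold aone;
        destruct (Nat.leb_spec r m); [ring|lia]).
  rewrite csum_exchange.
  rewrite (csum_ext _ (fun s => a s * (if Nat.eqb s k then 1 else 0))%C)
    by (intros s Hs; rewrite csumMl; now rewrite sum_coef_S).
  rewrite (csum_delta _ 1 n k) by (lia || (intros j Hj Hne;
    destruct (Nat.eqb_spec j k); [lia|ring])).
  rewrite Nat.eqb_refl. ring.
Qed.

Lemma amulC a b : aeq n (amul n c a b) (amul n c b a).
Proof.
  destruct HA as [_ [_ [_ [_ [Hc _]]]]]. intros k Hk.
  unfold amul. rewrite csum_exchange.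
  apply csum_ext; intros; apply csum_ext; intros. rewrite Hc by lia. ring.
Qed.

Lemma amulDl a b d : aeq n (amul n c (aadd a b) d) (aadd (amul n c a d) (amul n c b d)).
Proof.
  intros k Hk. unfold amul, aadd. rewrite <- csumD. apply csum_ext; intros.
  rewrite <- csumD. apply csum_ext; intros. ring.
Qed.

Lemma aeq_setoid : Setoid_Theory alg (aeq n).
Proof. split; [intros a|intros a b|intros a b d]; [reflexivity|symmetry|etransitivity]; eauto. Qed.

Lemma aeq_ring_ext : ring_eq_ext aadd (amul n c) aopp (aeq n).
Proof. split; exact _. Qed.

Lemma alg_ring : ring_theory azero (aone m) aadd (amul n c) asub aopp (aeq n).
Proof.
  split; try (intros; intros k _; unfold asub, aadd, aopp, azero; ring).
  - apply amul1a.
  - apply amulC.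
  - intros a b d. symmetry. apply HA.
  - apply amulDl.
Qed.

End Anm.

Definition is_radical (m : nat) (a : alg) : Prop := forall k, (1 <= k <= m)%nat -> a k = 0%C.
Definition is_semisimple (m : nat) (a : alg) : Prop := forall k, (m < k)%nat -> a k = 0%C.

Definition ss_part (m : nat) (a : alg) : alg := fun k => if Nat.leb k m then a k else 0%C.
Definition ss_inv (m : nat) (a : alg) : alg := fun k => if Nat.leb k m then (/ a k)%C else 0%C.

Lemma ss_part_semisimple m a : is_semisimple m (ss_part m a).
Proof. intros k Hk. unfold ss_part. destruct (Nat.leb_spec k m); [lia|reflexivity]. Qed.

Lemma ss_inv_semisimple m a : is_semisimple m (ss_inv m a).
Proof. intros k Hk. unfold ss_inv. destruct (Nat.leb_spec k m); [lia|reflexivity]. Qed.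

Section Radical.
Variables (m n : nat) (c : sconst).
Hypothesis HA : is_Anm m n c.
Add Ring alg_ring : (alg_ring m n c HA) (setoid (aeq_setoid n) (aeq_ring_ext n c)).

Fixpoint amulpow (V W : alg) (k : nat) : alg :=
  match k with 0 => V | S k => amul n c (amulpow V W k) W end.

Definition apow (W : alg) (k : nat) : alg := amulpow (aone m) W k.

Fixpoint neumann (k : nat) (W : alg) : alg :=
  match k with 0 => aone m | S k => aadd (aone m) (aopp (amul n c W (neumann k W))) end.

Fixpoint anat (k : nat) : alg :=
  match k with 0 => azero | S k => aadd (aone m) (anat k) end.

Definition vanishes_upto (j : nat) (a : alg) : Prop :=
  forall k, (1 <= k <= j)%nat -> (k <= n)%nat -> a k = 0%C.

(* axiom (2): multiplying by a radical element goes one level deeper in the filtration *)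
Lemma vanishes_upto_amul j a b : (m <= j)%nat -> vanishes_upto j a -> is_radical m b ->
  vanishes_upto (S j) (amul n c a b).
Proof.
  destruct HA as [_ [_ [H2 _]]]. intros Hj Ha Hb k Hk Hkn.
  unfold amul. apply csum_eq0. intros r Hr.
  destruct (le_lt_dec r j). { apply csum_eq0; intros. rewrite Ha by lia. ring. }
  apply csum_eq0. intros s Hs. destruct (le_lt_dec s m).
  - rewrite Hb by lia. ring.
  - rewrite H2 by lia. ring.
Qed.

Lemma amulpow_vanishes V W k : is_radical m V -> is_radical m W ->
  vanishes_upto (m + k) (amulpow V W k).
Proof.
  intros HV HW. induction k as [|k IH].
  - intros j Hj _. apply HV. lia.
  - rewrite Nat.add_succ_r. apply vanishes_upto_amul; auto; lia.
Qed.

Lemma amulpow_eq0 V W k : (n <= m + k)%nat -> is_radical m V -> is_radical m W ->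
  aeq n (amulpow V W k) azero.
Proof. intros Hn HV HW j Hj. apply (amulpow_vanishes V W k HV HW); lia. Qed.

Lemma apow_radical_eq0 W k : (n <= m + k)%nat -> is_radical m W -> aeq n (apow W (S k)) azero.
Proof.
  intros Hn HW. rewrite <- (amulpow_eq0 W W k Hn HW HW). unfold apow. clear Hn.
  induction k as [|k IH]; [cbn [amulpow]; ring|].
  change (aeq n (amul n c (amulpow (aone m) W (S k)) W) (amul n c (amulpow W W k) W)).
  now rewrite IH.
Qed.

Lemma amul_semisimple a b : is_semisimple m a -> is_semisimple m b ->
  forall k, (m < k <= n)%nat -> amul n c a b k = 0%C.
Proof.
  intros Ha Hb k Hk. unfold amul. apply csum_eq0. intros r Hr.
  apply csum_eq0. intros s Hs.
  destruct (le_lt_dec r m); [|rewrite Ha by lia; ring].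
  destruct (le_lt_dec s m); [|rewrite Hb by lia; ring].
  rewrite (coef_SS_N m n c HA) by lia. ring.
Qed.

Lemma anat_coord k a j : (1 <= j <= n)%nat -> amul n c (anat k) a j = (INR k * a j)%C.
Proof.
  intros Hj. induction k as [|k IH]; simpl anat.
  - assert (H0 : aeq n (amul n c azero a) azero) by ring.
    rewrite (H0 j Hj). unfold azero. apply injective_projections; simpl; ring.
  - assert (HS : aeq n (amul n c (aadd (aone m) (anat k)) a) (aadd a (amul n c (anat k) a)))
      by ring.
    rewrite (HS j Hj), S_INR. unfold aadd. rewrite IH.
    apply injective_projections; simpl; ring.
Qed.

Lemma inv_unit_plus_nilpotent D Dinv Z W :
  aeq n (amul n c D Dinv) (aone m) ->
  aeq n W (asub (amul n c Dinv Z) (aone m)) ->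
  aeq n (apow W 5) azero ->
  aeq n (amul n c Z (amul n c Dinv (neumann 4 W))) (aone m).
Proof.
  intros HD HW H5.
  assert (HZ : aeq n Z (amul n c D (aadd (aone m) W))).
  { transitivity (amul n c (amul n c D Dinv) Z); [rewrite HD; ring|].
    rewrite HW. unfold asub. ring. }
  rewrite HZ.
  transitivity (aadd (amul n c D Dinv) (amul n c (amul n c D Dinv) (apow W 5))).
  { cbn [apow amulpow neumann]. unfold asub. ring. }
  rewrite HD, H5. ring.
Qed.

Lemma log_derivative_unit_plus_nilpotent D Dinv D' Dinv' Z Z' W W' :
  aeq n (amul n c D Dinv) (aone m) ->
  aeq n (aadd (amul n c D' Dinv) (amul n c D Dinv')) azero ->
  aeq n W (asub (amul n c Dinv Z) (aone m)) ->
  aeq n W' (aadd (amul n c Dinv' Z) (amul n c Dinv Z')) ->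
  aeq n (apow W 5) azero ->
  aeq n (amulpow W' W 4) azero ->
  aeq n (amul n c (amul n c Dinv (neumann 4 W)) Z')
        (aadd (amul n c Dinv D') (amul n c (neumann 3 W) W')).
Proof.
  intros HD HD' HW HW' H5 H5'.
  assert (HZ' : aeq n Z' (aadd (amul n c D' (aadd (aone m) W)) (amul n c D W'))).
  { transitivity (aadd (amul n c (aadd (amul n c D' Dinv) (amul n c D Dinv')) Z)
                       (amul n c (amul n c D Dinv) Z')).
    { rewrite HD, HD'. ring. }
    rewrite HW, HW'. unfold asub. ring. }
  rewrite HZ'.
  transitivity (aadd (amul n c (amul n c Dinv D') (aadd (aone m) (apow W 5)))
    (aadd (amul n c (amul n c D Dinv) (amul n c (neumann 3 W) W'))
          (amul n c (amul n c D Dinv) (amulpow W' W 4)))).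
  { cbn [apow amulpow neumann]. unfold asub. ring. }
  rewrite HD, H5, H5'. ring.
Qed.

End Radical.

Lemma is_derive_continuous (f : R -> R) t d : is_derive f t d -> continuous f t.
Proof. intros H. apply (ex_derive_continuous (K:=R_AbsRing) (V:=R_NormedModule)). now exists d. Qed.

Lemma is_derive_ext_eq (f g : R -> R) t d d' :
  (forall s, f s = g s) -> d = d' -> is_derive f t d -> is_derive g t d'.
Proof. intros E <-. now apply is_derive_ext. Qed.

Lemma Cnorm2_neq0 (z : C) : z <> 0%C -> fst z ^ 2 + snd z ^ 2 <> 0.
Proof.
  intros H E. apply H. destruct z as [a b]. simpl in *.
  assert (a = 0 /\ b = 0) as [-> ->] by nra. reflexivity.
Qed.

Lemma Cnorm2_gt0 (z : C) : z <> 0%C -> 0 < fst z ^ 2 + snd z ^ 2.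
Proof. intros H. pose proof (Cnorm2_neq0 z H). destruct z as [a b]; simpl in *. nra. Qed.

Lemma is_derive_Cnorm2 (f : R -> C) t a b :
  is_derive (fun s => fst (f s)) t a -> is_derive (fun s => snd (f s)) t b ->
  is_derive (fun s => fst (f s) ^ 2 + snd (f s) ^ 2) t (2 * fst (f t) * a + 2 * snd (f t) * b).
Proof.
  intros Ha Hb. eapply is_derive_ext_eq.
  3: apply is_derive_plus; apply Derive.is_derive_mult; [exact Ha|exact Ha|exact Hb|exact Hb].
  - intros s; cbn; ring.
  - cbn; ring.
Qed.

Definition ccontinuous (f : R -> C) : Prop :=
  forall t, continuous (fun s => fst (f s)) t /\ continuous (fun s => snd (f s)) t.

Definition is_C1 (f f' : R -> C) : Prop :=
  (forall t, is_derive (fun s => fst (f s)) t (fst (f' t)) /\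
             is_derive (fun s => snd (f s)) t (snd (f' t))) /\ ccontinuous f'.

Lemma ccontinuous_ext f g : (forall t, f t = g t) -> ccontinuous f -> ccontinuous g.
Proof.
  intros E H t. destruct (H t) as [H1 H2].
  split; [eapply (continuous_ext (fun s => fst (f s)))|eapply (continuous_ext (fun s => snd (f s)))];
    eauto; intros; simpl; now rewrite E.
Qed.

Lemma ccontinuous_const z : ccontinuous (fun _ => z).
Proof. intros t; split; apply continuous_const. Qed.

Lemma ccontinuous_real (x : R -> R) : (forall t, continuous x t) -> ccontinuous (fun t => RtoC (x t)).
Proof. intros H t. split; [apply H|apply continuous_const]. Qed.

Lemma ccontinuousD f g : ccontinuous f -> ccontinuous g -> ccontinuous (fun t => (f t + g t)%C).
Proof.
  intros H1 H2 t. destruct (H1 t) as [Hf1 Hf2], (H2 t) as [Hg1 Hg2].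
  split; [exact (continuous_plus _ _ t Hf1 Hg1)|exact (continuous_plus _ _ t Hf2 Hg2)].
Qed.

Lemma ccontinuousM f g : ccontinuous f -> ccontinuous g -> ccontinuous (fun t => (f t * g t)%C).
Proof.
  intros H1 H2 t. destruct (H1 t) as [Hf1 Hf2], (H2 t) as [Hg1 Hg2]. split.
  - exact (continuous_plus _ _ t (continuous_mult _ _ t Hf1 Hg1)
             (continuous_opp _ t (continuous_mult _ _ t Hf2 Hg2))).
  - exact (continuous_plus _ _ t (continuous_mult _ _ t Hf1 Hg2) (continuous_mult _ _ t Hf2 Hg1)).
Qed.

Lemma ccontinuousV f : ccontinuous f -> (forall t, f t <> 0%C) -> ccontinuous (fun t => (/ f t)%C).
Proof.
  intros H1 Hn t. destruct (H1 t) as [Hf1 Hf2].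
  assert (Hinv : continuous (fun s => / (fst (f s) ^ 2 + snd (f s) ^ 2)) t).
  { apply continuous_Rinv_comp; [|now apply Cnorm2_neq0].
    pose proof (continuous_const (U:=R_UniformSpace) 1 t) as H1c.
    exact (continuous_plus _ _ t (continuous_mult _ _ t Hf1 (continuous_mult _ _ t Hf1 H1c))
             (continuous_mult _ _ t Hf2 (continuous_mult _ _ t Hf2 H1c))). }
  split; [exact (continuous_mult _ _ t Hf1 Hinv)|exact (continuous_mult _ _ t (continuous_opp _ t Hf2) Hinv)].
Qed.

Lemma is_C1_continuous f f' : is_C1 f f' -> ccontinuous f.
Proof. intros [H _] t. destruct (H t). split; eapply is_derive_continuous; eauto. Qed.

Lemma is_C1_ext f f' g g' :
  (forall t, f t = g t) -> (forall t, f' t = g' t) -> is_C1 f f' -> is_C1 g g'.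
Proof.
  intros E E' [H Hc]. split; [|eapply ccontinuous_ext; eauto].
  intros t. destruct (H t) as [Ha Hb].
  split; [refine (is_derive_ext_eq _ _ _ _ _ _ _ Ha)|refine (is_derive_ext_eq _ _ _ _ _ _ _ Hb)];
    (intros; now rewrite ?E, ?E').
Qed.

Lemma is_C1_const z : is_C1 (fun _ => z) (fun _ => 0%C).
Proof. split; [intros; split; exact (is_derive_const _ _)|apply ccontinuous_const]. Qed.

Lemma is_C1_real (x x' : R -> R) : (forall t, is_derive x t (x' t)) -> (forall t, continuous x' t) ->
  is_C1 (fun t => RtoC (x t)) (fun t => RtoC (x' t)).
Proof.
  intros H1 H2. split; [|now apply ccontinuous_real].
  intros t; split; [apply H1|exact (is_derive_const _ _)].
Qed.

Lemma is_C1D f f' g g' : is_C1 f f' -> is_C1 g g' ->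
  is_C1 (fun t => (f t + g t)%C) (fun t => (f' t + g' t)%C).
Proof.
  intros [H1 C1] [H2 C2]. split; [|now apply ccontinuousD].
  intros t. destruct (H1 t) as [Hf1 Hf2], (H2 t) as [Hg1 Hg2].
  split; [exact (is_derive_plus _ _ _ _ _ Hf1 Hg1)|exact (is_derive_plus _ _ _ _ _ Hf2 Hg2)].
Qed.

Lemma is_C1M f f' g g' : is_C1 f f' -> is_C1 g g' ->
  is_C1 (fun t => (f t * g t)%C) (fun t => (f' t * g t + f t * g' t)%C).
Proof.
  intros Hf Hg. pose proof (is_C1_continuous _ _ Hf). pose proof (is_C1_continuous _ _ Hg).
  destruct Hf as [H1 C1], Hg as [H2 C2].
  split; [|apply ccontinuousD; apply ccontinuousM; auto].
  intros t. destruct (H1 t) as [Ha Hb], (H2 t) as [Hc Hd]. simpl. split.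
  - eapply is_derive_ext_eq; [| |apply is_derive_plus;
      [apply (Derive.is_derive_mult _ _ _ _ _ Ha Hc)
      |apply is_derive_opp, (Derive.is_derive_mult _ _ _ _ _ Hb Hd)]].
    + intros; cbn; ring.
    + cbn; ring.
  - eapply is_derive_ext_eq; [| |apply is_derive_plus;
      [apply (Derive.is_derive_mult _ _ _ _ _ Ha Hd)|apply (Derive.is_derive_mult _ _ _ _ _ Hb Hc)]].
    + intros; cbn; ring.
    + cbn; ring.
Qed.

Lemma is_C1V f f' : is_C1 f f' -> (forall t, f t <> 0%C) ->
  is_C1 (fun t => (/ f t)%C) (fun t => (- f' t / (f t * f t))%C).
Proof.
  intros Hf Hn. pose proof (is_C1_continuous _ _ Hf). destruct Hf as [H1 C1].
  split.
  - intros t. destruct (H1 t) as [Ha Hb]. pose proof (Cnorm2_neq0 _ (Hn t)) as HN.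
    pose proof (is_derive_inv _ _ _ (is_derive_Cnorm2 f t _ _ Ha Hb) HN) as HI.
    split.
    + eapply is_derive_ext_eq; [| |apply (Derive.is_derive_mult _ _ _ _ _ Ha HI)].
      * intros; reflexivity.
      * revert HN; destruct (f t) as [a b], (f' t) as [a' b']; cbn; intros HN.
        field. split; [|nra]. intro E. apply HN. nra.
    + eapply is_derive_ext_eq;
        [| |apply (Derive.is_derive_mult _ _ _ _ _ (is_derive_opp _ _ _ Hb) HI)].
      * intros; reflexivity.
      * revert HN; destruct (f t) as [a b], (f' t) as [a' b']; cbn; intros HN.
        field. split; [|nra]. intro E. apply HN. nra.
  - apply ccontinuousM; [|apply ccontinuousV; [now apply ccontinuousM|]].
    + intros t. destruct (C1 t) as [Hc1 Hc2]. split; [exact (continuous_opp _ t Hc1)|exact (continuous_opp _ t Hc2)].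
    + intros t. now apply Cmult_neq_0.
Qed.

Lemma is_C1_csum (f f' : nat -> R -> C) lo hi :
  (forall j, (lo <= j <= hi)%nat -> is_C1 (f j) (f' j)) ->
  is_C1 (fun t => csum (fun j => f j t) lo hi) (fun t => csum (fun j => f' j t) lo hi).
Proof.
  intros H. destruct (le_lt_dec lo hi) as [Hle|Hlt].
  - replace hi with (lo + (hi - lo))%nat in * by lia.
    induction (hi - lo)%nat as [|d IH].
    + rewrite Nat.add_0_r in *. unfold csum.
      apply (is_C1_ext (f lo) (f' lo)); [intros; now rewrite sum_n_n..|apply H; lia].
    + eapply is_C1_ext; [| |apply is_C1D; [apply IH; [intros; apply H; lia|lia]|apply (H (S (lo + d))); lia]];
        intros; unfold csum; rewrite Nat.add_succ_r, sum_n_Sm by lia; reflexivity.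
  - eapply is_C1_ext; [| |apply (is_C1_const 0%C)];
      intros; unfold csum; now rewrite sum_n_m_zero by lia.
Qed.

Definition is_CInt (f : R -> C) (a b : R) (v : C) : Prop :=
  is_RInt (fun t => fst (f t)) a b (fst v) /\ is_RInt (fun t => snd (f t)) a b (snd v).

Lemma is_CInt_CRInt f a b v : is_CInt f a b v -> CRInt f a b = v.
Proof.
  intros [H1 H2]. unfold CRInt, Re, Im.
  rewrite (is_RInt_unique (V:=R_CompleteNormedModule) _ _ _ _ H1).
  rewrite (is_RInt_unique (V:=R_CompleteNormedModule) _ _ _ _ H2).
  destruct v; reflexivity.
Qed.

Lemma is_CInt_unique f a b v w : is_CInt f a b v -> is_CInt f a b w -> v = w.
Proof. intros H1 H2. rewrite <- (is_CInt_CRInt _ _ _ _ H1). now apply is_CInt_CRInt. Qed.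

Lemma is_CInt_ext f g a b v w :
  (forall t, f t = g t) -> v = w -> is_CInt f a b v -> is_CInt g a b w.
Proof.
  intros E <- [H1 H2].
  split; eapply (is_RInt_ext (V:=R_NormedModule)); eauto; intros; simpl; now rewrite E.
Qed.

Lemma is_CInt_zero a b : is_CInt (fun _ => 0%C) a b 0%C.
Proof.
  pose proof (is_RInt_const (V:=R_NormedModule) a b 0) as H.
  match type of H with is_RInt _ _ _ ?v => replace v with 0 in H by (cbn; ring) end.
  now split.
Qed.

Lemma is_CIntD f g a b v w : is_CInt f a b v -> is_CInt g a b w ->
  is_CInt (fun t => (f t + g t)%C) a b (v + w)%C.
Proof.
  intros [H1 H2] [H3 H4].
  split; [exact (is_RInt_plus _ _ _ _ _ _ H1 H3)|exact (is_RInt_plus _ _ _ _ _ _ H2 H4)].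
Qed.

Lemma is_CIntMl (z : C) f a b v : is_CInt f a b v -> is_CInt (fun t => (z * f t)%C) a b (z * v)%C.
Proof.
  intros [H1 H2]. split.
  - exact (is_RInt_plus _ _ _ _ _ _
      (is_RInt_scal _ _ _ (fst z) _ H1) (is_RInt_opp _ _ _ _ (is_RInt_scal _ _ _ (snd z) _ H2))).
  - exact (is_RInt_plus _ _ _ _ _ _
      (is_RInt_scal _ _ _ (fst z) _ H2) (is_RInt_scal _ _ _ (snd z) _ H1)).
Qed.

Lemma is_CInt_csum (f : nat -> R -> C) (v : nat -> C) a b lo hi :
  (forall j, (lo <= j <= hi)%nat -> is_CInt (f j) a b (v j)) ->
  is_CInt (fun t => csum (fun j => f j t) lo hi) a b (csum v lo hi).
Proof.
  intros H. destruct (le_lt_dec lo hi) as [Hle|Hlt].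
  - replace hi with (lo + (hi - lo))%nat in * by lia.
    induction (hi - lo)%nat as [|d IH].
    + rewrite Nat.add_0_r in *. unfold csum.
      apply (is_CInt_ext (f lo) _ a b (v lo)); [intros; now rewrite sum_n_n..|apply H; lia].
    + eapply is_CInt_ext;
        [| |apply is_CIntD; [apply IH; [intros; apply H; lia|lia]|apply (H (S (lo + d))); lia]];
        intros; unfold csum; rewrite Nat.add_succ_r, sum_n_Sm by lia; reflexivity.
  - eapply is_CInt_ext; [| |apply is_CInt_zero];
      intros; unfold csum; now rewrite sum_n_m_zero by lia.
Qed.

Lemma is_CInt_continuous f a b : ccontinuous f -> is_CInt f a b (CRInt f a b).
Proof.
  intros H. unfold CRInt, Re, Im.
  split; simpl; apply (RInt_correct (V:=R_CompleteNormedModule));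
    apply (ex_RInt_continuous (V:=R_CompleteNormedModule)); intros; apply H.
Qed.

Lemma is_CInt_derive F F' a b : is_C1 F F' -> is_CInt F' a b (F b - F a)%C.
Proof.
  intros [Hd Hc]. split.
  - exact (is_RInt_derive (fun t => fst (F t)) (fun t => fst (F' t)) a b
            (fun t _ => proj1 (Hd t)) (fun t _ => proj1 (Hc t))).
  - exact (is_RInt_derive (fun t => snd (F t)) (fun t => snd (F' t)) a b
            (fun t _ => proj2 (Hd t)) (fun t _ => proj2 (Hc t))).
Qed.

Lemma is_derive_asin_0 : is_derive asin 0 1.
Proof.
  assert (H : -1 < 0 < 1) by lra.
  apply is_derive_Reals. apply (derive_pt_eq_1 _ _ _ (derivable_pt_asin 0 H)).
  rewrite derive_pt_asin. replace (1 - 0²) with 1 by (unfold Rsqr; ring).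
  rewrite sqrt_1. field.
Qed.

Lemma Cmod_sqr (z : C) : Cmod z * Cmod z = fst z ^ 2 + snd z ^ 2.
Proof.
  unfold Cmod. rewrite sqrt_sqrt; [reflexivity|].
  destruct z as [a b]; simpl; nra.
Qed.

Definition sin_arg_diff (g : R -> C) (t s : R) : R :=
  (snd (g s) * fst (g t) - fst (g s) * snd (g t)) / (Cmod (g s) * Cmod (g t)).

Lemma sin_arg_diff_polar (g : R -> C) (th : R -> R) (t s : R) :
  g s <> 0%C -> g t <> 0%C ->
  g s = (RtoC (Cmod (g s)) * (cos (th s), sin (th s)))%C ->
  g t = (RtoC (Cmod (g t)) * (cos (th t), sin (th t)))%C ->
  sin_arg_diff g t s = sin (th s - th t).
Proof.
  intros Hs Ht Ps Pt. unfold sin_arg_diff.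
  pose proof (proj1 (Cmod_gt_0 _) Hs). pose proof (proj1 (Cmod_gt_0 _) Ht).
  set (rs := Cmod (g s)) in *. set (rt := Cmod (g t)) in *.
  rewrite Ps, Pt. simpl. rewrite sin_minus. field. lra.
Qed.

Section ContinuousArgument.
Variables (g : R -> C) (th : R -> R).
Hypothesis g_neq0 : forall s, g s <> 0%C.
Hypothesis th_cont : forall s, 0 <= s <= 2 * PI -> continuous th s.
Hypothesis g_polar : forall s, 0 <= s <= 2 * PI ->
  g s = (RtoC (Cmod (g s)) * (cos (th s), sin (th s)))%C.

(* near an interior point the continuous argument moves by less than pi/2, so asin recovers it *)
Lemma arg_locally_asin t : 0 < t < 2 * PI ->
  locally t (fun s => th t + asin (sin_arg_diff g t s) = th s).
Proof.
  intros Ht.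
  assert (Hpi2 : 0 < PI / 2) by (pose proof PI_RGT_0; lra).
  assert (L1 : locally t (fun s => ball (th t) (mkposreal (PI/2) Hpi2) (th s))).
  { apply (th_cont t ltac:(lra)). apply locally_ball. }
  assert (L2 : locally t (fun s => 0 < s < 2 * PI)).
  { assert (He : 0 < Rmin t (2 * PI - t)) by (apply Rmin_pos; lra).
    exists (mkposreal _ He). intros y Hy. cbn in Hy. unfold AbsRing_ball in Hy; cbn in Hy.
    apply Rabs_def2 in Hy. pose proof (Rmin_l t (2*PI - t)). pose proof (Rmin_r t (2*PI - t)). lra. }
  eapply filter_imp; [|apply (filter_and _ _ L1 L2)].
  intros s [Hb Hs]. cbn in Hb. unfold AbsRing_ball in Hb; cbn in Hb. apply Rabs_def2 in Hb.
  rewrite (sin_arg_diff_polar g th t s (g_neq0 s) (g_neq0 t) (g_polar s ltac:(lra))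
    (g_polar t ltac:(lra))), asin_sin by lra.
  lra.
Qed.

Lemma is_derive_asin_sin_arg_diff g' t : is_C1 g g' ->
  is_derive (fun s => asin (sin_arg_diff g t s)) t (snd (/ g t * g' t)%C).
Proof.
  intros [Hd _]. destruct (Hd t) as [Ha Hb].
  set (a := fun s => fst (g s)) in *. set (b := fun s => snd (g s)) in *.
  set (r := fun s => Cmod (g s)).
  assert (Hr : 0 < r t) by apply Cmod_gt_0, g_neq0.
  assert (HN := is_derive_Cnorm2 g t _ _ Ha Hb).
  assert (HNp : 0 < a t ^ 2 + b t ^ 2) by apply Cnorm2_gt0, g_neq0.
  assert (Hrr : is_derive (fun s => r s * r t) t
                 ((2 * a t * fst (g' t) + 2 * b t * snd (g' t)) / (2 * sqrt (a t ^ 2 + b t ^ 2)) * r t + r t * 0)).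
  { apply (Derive.is_derive_mult _ _ _ _ _ (is_derive_sqrt _ _ _ HN HNp) (is_derive_const (r t) t)). }
  assert (Hk := is_derive_inv _ _ _ Hrr ltac:(nra)).
  assert (Hu : is_derive (fun s => b s * a t - a s * b t) t (snd (g' t) * a t - fst (g' t) * b t)).
  { eapply is_derive_ext_eq; [| |apply is_derive_plus;
      [apply (Derive.is_derive_mult _ _ _ _ _ Hb (is_derive_const (a t) t))
      |apply is_derive_opp, (Derive.is_derive_mult _ _ _ _ _ Ha (is_derive_const (b t) t))]].
    - intros; reflexivity.
    - cbn; ring. }
  assert (Hh := Derive.is_derive_mult _ _ _ _ _ Hu Hk).
  assert (Ht0 : sin_arg_diff g t t = 0) by (unfold sin_arg_diff, Rdiv; ring).
  assert (Has : is_derive asin (sin_arg_diff g t t) 1) by (rewrite Ht0; apply is_derive_asin_0).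
  eapply is_derive_ext_eq; [| |apply (is_derive_comp _ _ _ _ _ Has Hh)].
  - intros s. reflexivity.
  - cbn. destruct (g' t) as [a' b']. cbn.
    replace (b t * a t - a t * b t) with 0 by ring. rewrite Rmult_0_l, Rplus_0_r, Rmult_1_r.
    unfold r, a, b. rewrite Cmod_sqr. pose proof (Cnorm2_neq0 _ (g_neq0 t)). field. nra.
Qed.


Lemma is_derive_arg g' t : is_C1 g g' -> 0 < t < 2 * PI -> is_derive th t (snd (/ g t * g' t)%C).
Proof.
  intros Hg Ht. apply (is_derive_ext_loc _ _ _ _ (arg_locally_asin t Ht)).
  eapply is_derive_ext_eq; [| |exact (is_derive_plus _ _ _ _ _ (is_derive_const (th t) t)
                                     (is_derive_asin_sin_arg_diff g' t Hg))].
  - reflexivity.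
  - cbn; ring.
Qed.

(* the argument is differentiable only inside (0, 2 pi), hence the mean value theorem
   instead of the fundamental theorem of calculus *)
Lemma is_RInt_Im_log_derivative g' : is_C1 g g' ->
  is_RInt (fun t => snd (/ g t * g' t)%C) 0 (2 * PI) (th (2 * PI) - th 0).
Proof.
  intros Hg. pose proof PI_RGT_0.
  set (k := fun t => snd (/ g t * g' t)%C).
  assert (Hk : forall t, continuous k t).
  { apply ccontinuousM; [apply ccontinuousV|apply Hg]; auto. eapply is_C1_continuous; eauto. }
  assert (Hex : forall b, ex_RInt k 0 b)
    by (intros b; apply (ex_RInt_continuous (V:=R_CompleteNormedModule)); intros; apply Hk).
  set (I := fun s => RInt k 0 s).
  assert (HI : forall x, is_derive I x (k x)).
  { intros x. apply (is_derive_RInt k I 0 x); [|apply Hk].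
    apply filter_forall. intros b. apply (RInt_correct (V:=R_CompleteNormedModule)), Hex. }

  destruct (MVT_gen (fun s => I s - th s) 0 (2 * PI) (fun _ => 0)) as [x [_ Hx]].
  - rewrite Rmin_left, Rmax_right by lra. intros x Hx.
    eapply is_derive_ext_eq; [| |exact (is_derive_plus _ _ _ _ _ (HI x)
                                         (is_derive_opp _ _ _ (is_derive_arg g' x Hg Hx)))].
    + reflexivity.
    + cbn. unfold k. ring.
  - rewrite Rmin_left, Rmax_right by lra. intros x Hx.
    apply (continuity_pt_minus I th); apply continuity_pt_filterlim.
    + eapply is_derive_continuous, HI.
    + now apply th_cont.
  - unfold I in Hx. rewrite RInt_point in Hx. unfold zero in Hx; simpl in Hx.
    replace (th (2 * PI) - th 0) with (RInt k 0 (2 * PI)) by lra.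
    apply (RInt_correct (V:=R_CompleteNormedModule)), Hex.
Qed.

End ContinuousArgument.

Lemma is_RInt_Re_log_derivative (g g' : R -> C) a b :
  is_C1 g g' -> (forall t, g t <> 0%C) -> g b = g a ->
  is_RInt (fun t => fst (/ g t * g' t)%C) a b 0.
Proof.
  intros Hg Hnz Hper.
  assert (Hcont : ccontinuous (fun t => (/ g t * g' t)%C)).
  { apply ccontinuousM; [apply ccontinuousV|apply Hg]; auto. eapply is_C1_continuous; eauto. }
  set (f := fun t => / 2 * ln (fst (g t) ^ 2 + snd (g t) ^ 2)).
  assert (Hf : forall t, is_derive f t (fst (/ g t * g' t)%C)).
  { intros t. destruct (proj1 Hg t) as [Ha Hb].
    pose proof (Cnorm2_gt0 _ (Hnz t)) as HNp.
    pose proof (is_derive_comp ln _ t _ _ (is_derive_ln _ HNp) (is_derive_Cnorm2 g t _ _ Ha Hb)) as Hl.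
    eapply is_derive_ext_eq; [| |exact (is_derive_scal _ t (/2) _ Hl)].
    - reflexivity.
    - revert HNp; destruct (g t) as [x y], (g' t) as [x' y']; cbn; intros. field. nra. }
  pose proof (is_RInt_derive f _ a b (fun t _ => Hf t) (fun t _ => proj1 (Hcont t))) as HI.
  match type of HI with is_RInt _ _ _ ?v => replace v with 0 in HI end; [exact HI|].
  unfold f. cbn. rewrite Hper. ring.
Qed.

Lemma is_CInt_log_derivative_winding (g g' : R -> C) (w : Z) :
  is_C1 g g' -> (forall t, g t <> 0%C) -> g (2 * PI) = g 0 -> winding_number_0 g w ->
  is_CInt (fun t => (/ g t * g' t)%C) 0 (2 * PI) (0, 2 * PI * IZR w).
Proof.
  intros Hg Hnz Hper [_ [th [Hc [Hpolar Hdelta]]]]. split; cbn.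
  - now apply is_RInt_Re_log_derivative.
  - rewrite <- Hdelta. now apply (is_RInt_Im_log_derivative g th).
Qed.

Definition is_C1_alg (n : nat) (F F' : R -> alg) : Prop :=
  forall k, (1 <= k <= n)%nat -> is_C1 (fun t => F t k) (fun t => F' t k).

Lemma is_C1_alg_ext n F F' G G' : (forall t, aeq n (F t) (G t)) ->
  (forall t, aeq n (F' t) (G' t)) -> is_C1_alg n F F' -> is_C1_alg n G G'.
Proof. intros E E' H k Hk. eapply is_C1_ext; [intros; now apply E|intros; now apply E'|auto]. Qed.

Lemma is_C1_alg_const n a : is_C1_alg n (fun _ => a) (fun _ => azero).
Proof. intros k Hk. apply is_C1_const. Qed.

Lemma is_C1_algD n F F' G G' : is_C1_alg n F F' -> is_C1_alg n G G' ->
  is_C1_alg n (fun t => aadd (F t) (G t)) (fun t => aadd (F' t) (G' t)).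
Proof. intros H1 H2 k Hk. exact (is_C1D _ _ _ _ (H1 k Hk) (H2 k Hk)). Qed.

Lemma is_C1_algN n F F' : is_C1_alg n F F' -> is_C1_alg n (fun t => aopp (F t)) (fun t => aopp (F' t)).
Proof.
  intros H k Hk. eapply is_C1_ext; [| |exact (is_C1M _ _ _ _ (is_C1_const (-1)%C) (H k Hk))];
    intros; unfold aopp; apply injective_projections; cbn; ring.
Qed.

Lemma is_C1_algM n c F F' G G' : is_C1_alg n F F' -> is_C1_alg n G G' ->
  is_C1_alg n (fun t => amul n c (F t) (G t))
              (fun t => aadd (amul n c (F' t) (G t)) (amul n c (F t) (G' t))).
Proof.
  intros H1 H2 k Hk. unfold amul.
  eapply is_C1_ext; [reflexivity| |].
  2:{ apply (is_C1_csum (fun r t => csum (fun s => (F t r * G t s * c r s k)%C) 1 n)).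
      intros r Hr. apply (is_C1_csum (fun s t => (F t r * G t s * c r s k)%C)). intros s Hs.
      apply is_C1M; [apply is_C1M; [apply H1|apply H2]; lia|apply is_C1_const]. }
  intros t. unfold aadd. rewrite <- csumD. apply csum_ext; intros.
  rewrite <- csumD. apply csum_ext; intros. ring.
Qed.

Lemma is_CInt_amul_l n c (F : R -> alg) (x' : R -> R) (e : alg) a b k :
  (forall s, (1 <= s <= n)%nat -> ccontinuous (fun t => F t s)) ->
  (forall t, continuous x' t) -> (1 <= k <= n)%nat ->
  is_CInt (fun t => (RtoC (x' t) * amul n c e (F t) k)%C) a b
    (amul n c e (fun s => CRInt (fun t => (F t s * RtoC (x' t))%C) a b) k).
Proof.
  intros HF Hx Hk. unfold amul.
  eapply is_CInt_ext; [| |apply (is_CInt_csum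
    (fun r t => csum (fun s => (e r * c r s k) * (F t s * RtoC (x' t)))%C 1 n)
    (fun r => csum (fun s => (e r * c r s k) * CRInt (fun t => (F t s * RtoC (x' t))%C) a b)%C 1 n))].
  - intros t. rewrite <- csumMl. apply csum_ext; intros.
    rewrite <- csumMl. apply csum_ext; intros. ring.
  - apply csum_ext; intros. apply csum_ext; intros. ring.
  - intros r Hr. apply (is_CInt_csum (fun s t => (e r * c r s k) * (F t s * RtoC (x' t)))%C).
    intros s Hs. apply is_CIntMl, is_CInt_continuous, ccontinuousM; auto.
    now apply ccontinuous_real.
Qed.

Lemma is_derive_circle_coord (rho a b t : R) :
  is_derive (fun t => rho * (cos t * a + sin t * b)) t (rho * (- sin t * a + cos t * b)).
Proof. auto_derive; auto. ring. Qed.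

Lemma continuous_circle_tangent (rho a b t : R) :
  continuous (fun t => rho * (- sin t * a + cos t * b)) t.
Proof. apply (is_derive_continuous _ _ (- (rho * (cos t * a + sin t * b)))). auto_derive; auto. ring. Qed.

Lemma is_C1_circle_coord (rho a b : R) :
  is_C1 (fun t => RtoC (rho * (cos t * a + sin t * b)))
        (fun t => RtoC (rho * (- sin t * a + cos t * b))).
Proof. apply is_C1_real; intros; [apply is_derive_circle_coord|apply continuous_circle_tangent]. Qed.

Section PowerDerivative.
Variables (m n : nat) (c : sconst).
Hypothesis HA : is_Anm m n c.
Add Ring alg_ring : (alg_ring m n c HA) (setoid (aeq_setoid n) (aeq_ring_ext n c)).

Lemma is_C1_alg_apow W W' k : is_C1_alg n W W' ->
  is_C1_alg n (fun t => apow m n c (W t) (S k))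
              (fun t => amul n c (anat m (S k)) (amul n c (apow m n c (W t) k) (W' t))).
Proof.
  intros HW. induction k as [|k IH].
  - eapply is_C1_alg_ext; [| |exact (is_C1_algM n c _ _ _ _ (is_C1_alg_const n (aone m)) HW)];
      intros t; cbn [apow amulpow anat]; ring.
  - eapply is_C1_alg_ext; [| |exact (is_C1_algM n c _ _ _ _ IH HW)];
      intros t; unfold apow; cbn [amulpow anat]; ring.
Qed.

Lemma is_C1_alg_neumann k W W' : is_C1_alg n W W' ->
  exists N', is_C1_alg n (fun t => neumann m n c k (W t)) N'.
Proof.
  intros HW. induction k as [|k [N' IH]].
  - exists (fun _ => azero). exact (is_C1_alg_const n (aone m)).
  - eexists. exact (is_C1_algD _ _ _ _ _ (is_C1_alg_const n (aone m))
                      (is_C1_algN _ _ _ (is_C1_algM n c _ _ _ _ HW IH))).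
Qed.

End PowerDerivative.

Section Circle.
Variables (m n : nat) (c : sconst) (e2 e3 : alg) (rho : R) (p q : R * R * R).
Hypothesis HA : is_Anm m n c.
Hypothesis Hn4 : (n <= m + 4)%nat.
Variable Psi : R -> alg.
Hypothesis HPsi : forall t, aeq n (amul n c (zeta_C m e2 e3 rho p q t) (Psi t)) (aone m).
Hypothesis Hwind : forall u, (1 <= u <= m)%nat ->
  pos_jordan_around_0 (fun t => f_ u (zeta_C m e2 e3 rho p q t)).
Add Ring alg_ring : (alg_ring m n c HA) (setoid (aeq_setoid n) (aeq_ring_ext n c)).

Let curve t := zeta_C m e2 e3 rho p q t.
Let curve' t := zeta m e2 e3 (dcx rho p q t) (dcy rho p q t) (dcz rho p q t).
Let Dinv t := ss_inv m (curve t).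
Let Dinv' t : alg := fun k => if Nat.leb k m then (- curve' t k / (curve t k * curve t k))%C else 0%C.
Let W t := asub (amul n c (Dinv t) (curve t)) (aone m).
Let W' t := aadd (amul n c (Dinv' t) (curve t)) (amul n c (Dinv t) (curve' t)).
Let Phi t := amul n c (Dinv t) (neumann m n c 4 (W t)).

Lemma curve_coord_neq0 t k : (1 <= k <= m)%nat -> curve t k <> 0%C.
Proof.
  intros Hk E0. pose proof (Anm_le m n c HA).
  specialize (HPsi t k ltac:(lia)). rewrite (amul_coord_S m n c HA) in HPsi by lia.
  unfold curve in E0. rewrite E0, Cmult_0_l in HPsi. unfold aone in HPsi.
  destruct (Nat.leb_spec k m); [|lia]. injection HPsi. lra.
Qed.

Lemma curve_periodic : curve (2 * PI) = curve 0.
Proof.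
  unfold curve, zeta_C. destruct p as [[p1 p2] p3], q as [[q1 q2] q3]. cbn.
  now rewrite cos_2PI, sin_2PI, cos_0, sin_0.
Qed.

Lemma is_C1_alg_curve : is_C1_alg n curve curve'.
Proof.
  intros k Hk. unfold curve, curve', zeta_C, zeta, aadd, ascal.
  destruct p as [[p1 p2] p3], q as [[q1 q2] q3]. cbn.
  eapply is_C1_ext; [reflexivity| |].
  2:{ apply is_C1D; [|apply is_C1D]; (apply is_C1M; [apply is_C1_circle_coord|apply is_C1_const]). }
  intros t. cbn. ring.
Qed.

Lemma is_C1_alg_Dinv : is_C1_alg n Dinv Dinv'.
Proof.
  intros k Hk. unfold Dinv, Dinv', ss_inv. destruct (Nat.leb_spec k m).
  - apply is_C1V; [apply (is_C1_alg_curve k Hk)|intros; apply curve_coord_neq0; lia].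
  - apply is_C1_const.
Qed.

Lemma is_C1_alg_W : is_C1_alg n W W'.
Proof.
  eapply is_C1_alg_ext; [| |apply is_C1_algD;
    [apply (is_C1_algM n c _ _ _ _ is_C1_alg_Dinv is_C1_alg_curve)
    |apply is_C1_algN, (is_C1_alg_const n (aone m))]].
  - reflexivity.
  - intros t. unfold W'. ring.
Qed.

Lemma ss_part_mul_inv t : aeq n (amul n c (ss_part m (curve t)) (Dinv t)) (aone m).
Proof.
  intros k Hk. unfold aone. destruct (le_lt_dec k m).
  - rewrite (amul_coord_S m n c HA) by lia. unfold ss_part, Dinv, ss_inv.
    destruct (Nat.leb_spec k m); [|lia]. field. apply curve_coord_neq0; lia.
  - rewrite (amul_semisimple m n c HA); [|apply ss_part_semisimple|apply ss_inv_semisimple|lia].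
    destruct (Nat.leb_spec k m); [lia|reflexivity].
Qed.

Lemma ss_part_mul_inv_deriv t :
  aeq n (aadd (amul n c (ss_part m (curve' t)) (Dinv t)) (amul n c (ss_part m (curve t)) (Dinv' t)))
        azero.
Proof.
  assert (HD' : is_semisimple m (Dinv' t))
    by (intros k Hk; unfold Dinv'; destruct (Nat.leb_spec k m); [lia|reflexivity]).
  intros k Hk. unfold aadd, azero. destruct (le_lt_dec k m).
  - rewrite !(amul_coord_S m n c HA) by lia. unfold ss_part, Dinv, Dinv', ss_inv.
    destruct (Nat.leb_spec k m); [|lia]. field. apply curve_coord_neq0; lia.
  - rewrite !(amul_semisimple m n c HA);
      try (apply ss_part_semisimple || apply ss_inv_semisimple || apply HD'); try lia.
    ring.
Qed.

Lemma W_radical t : is_radical m (W t).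
Proof.
  intros k Hk. pose proof (Anm_le m n c HA). unfold W, asub, aadd, aopp.
  rewrite (amul_coord_S m n c HA) by lia. unfold Dinv, ss_inv, aone.
  destruct (Nat.leb_spec k m); [|lia]. field. apply curve_coord_neq0; lia.
Qed.

Lemma W'_radical t : is_radical m (W' t).
Proof.
  intros k Hk. pose proof (Anm_le m n c HA). unfold W', aadd.
  rewrite !(amul_coord_S m n c HA) by lia. unfold Dinv, Dinv', ss_inv.
  destruct (Nat.leb_spec k m); [|lia]. field. apply curve_coord_neq0; lia.
Qed.

Lemma Psi_eq_Phi t : aeq n (Psi t) (Phi t).
Proof.
  assert (HPhi : aeq n (amul n c (curve t) (Phi t)) (aone m)).
  { apply (inv_unit_plus_nilpotent m n c HA (ss_part m (curve t))); [apply ss_part_mul_inv|reflexivity|].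
    apply (apow_radical_eq0 m n c HA); [lia|apply W_radical]. }
  transitivity (amul n c (amul n c (curve t) (Phi t)) (Psi t)); [rewrite HPhi; ring|].
  transitivity (amul n c (amul n c (curve t) (Psi t)) (Phi t)); [ring|].
  unfold curve. rewrite HPsi. ring.
Qed.

Lemma Psi_mul_curve' t :
  aeq n (amul n c (Psi t) (curve' t))
        (aadd (amul n c (Dinv t) (ss_part m (curve' t))) (amul n c (neumann m n c 3 (W t)) (W' t))).
Proof.
  rewrite Psi_eq_Phi.
  apply (log_derivative_unit_plus_nilpotent m n c HA (ss_part m (curve t)) (Dinv t)
    (ss_part m (curve' t)) (Dinv' t) (curve t) (curve' t) (W t) (W' t));
    [apply ss_part_mul_inv|apply ss_part_mul_inv_deriv|reflexivity|reflexivity| |].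
  - apply (apow_radical_eq0 m n c HA); [lia|apply W_radical].
  - apply (amulpow_eq0 m n c HA); [lia|apply W'_radical|apply W_radical].
Qed.

Lemma ccontinuous_Psi s : (1 <= s <= n)%nat -> ccontinuous (fun t => Psi t s).
Proof.
  intros Hs. destruct (is_C1_alg_neumann m n c 4 _ _ is_C1_alg_W) as [N' HN].
  pose proof (is_C1_algM n c _ _ _ _ is_C1_alg_Dinv HN s Hs) as HPhi.
  eapply ccontinuous_ext; [|exact (is_C1_continuous _ _ HPhi)].
  intros t. symmetry. exact (Psi_eq_Phi t s Hs).
Qed.

Lemma is_CInt_curve_integral k : (1 <= k <= n)%nat ->
  is_CInt (fun t => amul n c (Psi t) (curve' t) k) 0 (2 * PI)
          (curve_integral n c e2 e3 rho p q Psi k).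
Proof.
  intros Hk.
  assert (Hd : forall t, continuous (dcx rho p q) t /\ continuous (dcy rho p q) t /\
                         continuous (dcz rho p q) t).
  { intros t. destruct p as [[p1 p2] p3], q as [[q1 q2] q3]. cbn.
    split; [|split]; apply continuous_circle_tangent. }
  pose proof (is_CInt_continuous (fun t => (Psi t k * RtoC (dcx rho p q t))%C) 0 (2 * PI)
    (ccontinuousM _ _ (ccontinuous_Psi k Hk) (ccontinuous_real _ (fun t => proj1 (Hd t))))) as Ix.
  pose proof (is_CInt_amul_l n c Psi _ e2 0 (2 * PI) k ccontinuous_Psi
    (fun t => proj1 (proj2 (Hd t))) Hk) as Iy.
  pose proof (is_CInt_amul_l n c Psi _ e3 0 (2 * PI) k ccontinuous_Psi
    (fun t => proj2 (proj2 (Hd t))) Hk) as Iz.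
  eapply is_CInt_ext; [|reflexivity|exact (is_CIntD _ _ _ _ _ _ Ix (is_CIntD _ _ _ _ _ _ Iy Iz))].
  intros t. unfold curve', zeta. rewrite !amulDr, !amulZr.
  assert (E1 : aeq n (amul n c (Psi t) (aone m)) (Psi t)) by ring.
  assert (E2 : aeq n (amul n c (Psi t) e2) (amul n c e2 (Psi t))) by ring.
  assert (E3 : aeq n (amul n c (Psi t) e3) (amul n c e3 (Psi t))) by ring.
  rewrite (E1 k Hk), (E2 k Hk), (E3 k Hk). ring.
Qed.

Lemma is_CInt_semisimple_part k : (1 <= k <= n)%nat ->
  is_CInt (fun t => amul n c (Dinv t) (ss_part m (curve' t)) k) 0 (2 * PI)
          (cscal (0, 2 * PI) (aone m) k).
Proof.
  intros Hk. unfold cscal, aone. destruct (Nat.leb_spec k m).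
  - destruct (Hwind k ltac:(lia)) as [_ Hw].
    eapply is_CInt_ext; [| |exact (is_CInt_log_derivative_winding _ _ 1
      (is_C1_alg_curve k Hk) (fun t => curve_coord_neq0 t k ltac:(lia))
      (f_equal (fun z => z k) curve_periodic) Hw)].
    + intros t. rewrite (amul_coord_S m n c HA) by lia. unfold Dinv, ss_inv, ss_part.
      destruct (Nat.leb_spec k m); [reflexivity|lia].
    + apply injective_projections; cbn; ring.
  - eapply is_CInt_ext; [| |apply is_CInt_zero].
    + intros t. symmetry. apply (amul_semisimple m n c HA);
        [apply ss_inv_semisimple|apply ss_part_semisimple|lia].
    + now rewrite Cmult_0_r.
Qed.

Lemma is_CInt_pow_mul_W' j k : (1 <= k <= n)%nat ->
  is_CInt (fun t => amul n c (apow m n c (W t) j) (W' t) k) 0 (2 * PI) 0%C.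
Proof.
  intros Hk.
  assert (HSj : INR (S j) <> 0) by (apply not_0_INR; lia).
  assert (HL : is_C1 (fun t => (RtoC (/ INR (S j)) * apow m n c (W t) (S j) k)%C)
                     (fun t => amul n c (apow m n c (W t) j) (W' t) k)).
  { eapply is_C1_ext; [reflexivity| |exact (is_C1M _ _ _ _ (is_C1_const _)
      (is_C1_alg_apow m n c HA _ _ j is_C1_alg_W k Hk))].
    intros t. cbv beta. rewrite (anat_coord m n c HA) by auto.
    apply injective_projections; cbn; field; auto. }
  eapply is_CInt_ext; [reflexivity| |exact (is_CInt_derive _ _ 0 (2 * PI) HL)].
  unfold W, Dinv. rewrite curve_periodic. apply injective_projections; cbn; ring.
Qed.

Lemma is_CInt_radical_part k : (1 <= k <= n)%nat ->
  is_CInt (fun t => amul n c (neumann m n c 3 (W t)) (W' t) k) 0 (2 * PI) 0%C.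
Proof.
  intros Hk.
  assert (E : forall t, aeq n (amul n c (neumann m n c 3 (W t)) (W' t))
    (aadd (aadd (amul n c (apow m n c (W t) 0) (W' t)) (aopp (amul n c (apow m n c (W t) 1) (W' t))))
          (aadd (amul n c (apow m n c (W t) 2) (W' t)) (aopp (amul n c (apow m n c (W t) 3) (W' t)))))).
  { intros t. unfold apow. cbn [neumann amulpow]. ring. }
  assert (Hopp : forall j, is_CInt (fun t => aopp (amul n c (apow m n c (W t) j) (W' t)) k) 0 (2 * PI) 0%C).
  { intros j. eapply is_CInt_ext; [| |exact (is_CIntMl (-1) _ _ _ _ (is_CInt_pow_mul_W' j k Hk))];
      [intros t; unfold aopp|]; apply injective_projections; cbn; ring. }
  eapply is_CInt_ext; [intros t; symmetry; exact (E t k Hk)| |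
    exact (is_CIntD _ _ _ _ _ _ (is_CIntD _ _ _ _ _ _ (is_CInt_pow_mul_W' 0 k Hk) (Hopp 1%nat))
                                (is_CIntD _ _ _ _ _ _ (is_CInt_pow_mul_W' 2 k Hk) (Hopp 3%nat)))].
  apply injective_projections; cbn; ring.
Qed.

Lemma curve_integral_coord k : (1 <= k <= n)%nat ->
  curve_integral n c e2 e3 rho p q Psi k = cscal (0, 2 * PI) (aone m) k.
Proof.
  intros Hk. apply (is_CInt_unique _ _ _ _ _ (is_CInt_curve_integral k Hk)).
  eapply is_CInt_ext; [| |exact (is_CIntD _ _ _ _ _ _
    (is_CInt_semisimple_part k Hk) (is_CInt_radical_part k Hk))].
  - intros t. symmetry. apply (Psi_mul_curve' t k Hk).
  - apply Cplus_0_r.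
Qed.

End Circle.

Theorem theorem8 (m n : nat) (c : sconst) (e2 e3 : alg) :
  n = (m + 4)%nat ->
  is_Anm m n c ->
  (* e1 = 1, e2, e3 linearly independent over R *)
  (forall x y z : R, aeq n (zeta m e2 e3 x y z) (fun _ => 0%C) -> x = 0 /\ y = 0 /\ z = 0) ->
  (* standing assumption: f_u(E_3) = C for all u = 1..m *)
  (forall u, (1 <= u <= m)%nat ->
     forall w : C, exists x y z : R, f_ u (zeta m e2 e3 x y z) = w) ->
  (* hypotheses on the structure constants *)
  let U := Ups c in
  let i1 := (m + 1)%nat in let i2 := (m + 2)%nat in
  let i3 := (m + 3)%nat in let i4 := (m + 4)%nat in
  (U i1 i1 i2 * U i2 i2 i3 = 0)%C ->
  (U i1 i1 i2 * U i2 i2 i4 = 0)%C ->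
  (U i1 i1 i3 * U i2 i3 i4 = 0)%C ->
  (U i3 i3 i4 * U i1 i1 i3 = 0)%C ->
  (U i1 i2 i3 * U i1 i3 i4 = 0)%C ->
  (U i1 i2 i3 * U i2 i3 i4 = 0)%C ->
  (U i1 i2 i3 * U i3 i3 i4 = 0)%C ->
  (U i1 i1 i2 * U i1 i2 i3 * U i2 i3 i4 = 0)%C ->
  (U i1 i1 i2 * U i1 i2 i3 * U i3 i3 i4 = 0)%C ->
  (U i2 i2 i3 * U i1 i3 i4 = 0)%C ->
  (U i2 i2 i3 * U i3 i3 i4 = 0)%C ->
  (U i2 i2 i3 * U i1 i1 i2 * U i1 i3 i4 = 0)%C ->
  (U i2 i2 i3 * U i1 i1 i2 * U i2 i3 i4 = 0)%C ->
  (U i2 i2 i3 * U i1 i1 i2 * U i3 i3 i4 = 0)%C ->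
  (* for every circle C as in the context *)
  forall (rho : R) (p q : R * R * R),
    0 < rho -> orthonormal p q ->
    (forall u, (1 <= u <= m)%nat ->
       pos_jordan_around_0 (fun t => f_ u (zeta_C m e2 e3 rho p q t))) ->
    (* Psi t = zeta(t)^{-1} *)
    forall Psi : R -> alg,
      (forall t, aeq n (amul n c (zeta_C m e2 e3 rho p q t) (Psi t)) (aone m)) ->
      aeq n (curve_integral n c e2 e3 rho p q Psi)
            (cscal (0, 2 * PI) (aone m)).
Proof.
  intros Hn HA _ _ U i1 i2 i3 i4 _ _ _ _ _ _ _ _ _ _ _ _ _ _ rho p q _ _ Hwind Psi HPsi k Hk.
  subst n. exact (curve_integral_coord m (m + 4) c e2 e3 rho p q HA (le_n _) Psi HPsi Hwind k Hk).
Qed.
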